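(* Let $r$ be a prime divisor of $n$ and let $S\subseteq\mathbb{Z}_n$. Assume there is $m\mid n$ with $\gcd(m,r)=1$ such that $\Phi_{mr}\mid m_S$ but $\Phi_m\nmid m_S$. Then $|S|\ge r$. Moreover, every coset of the subgroup of $\mathbb{Z}_n$ of order $n/r$ contains at least one point of $S$.
   Context: $\Phi_d$ denotes the $d$-th cyclotomic polynomial; $m_S(x)=\sum_{s\in S}x^s$ is the mask polynomial of $S$, where elements of $\mathbb{Z}_n$ are identified with $\{0,\dots,n-1\}$ and the polynomial is considered modulo $x^n-1$. *)

From mathcomp Require Import all_boot all_order all_algebra all_field.
Set Implicit Arguments. Unset Strict Implicit. Unset Printing Implicit Defensive.
Import GRing.Theory.
Local Open Scope ring_scope.

(* Mask polynomial of S ⊆ Z_n (elements of Z_n identified with 0..n-1,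
   i.e. with the ordinals 'I_n): m_S(x) = sum_{s in S} x^s, with integer
   coefficients. *)
Definition mask_poly (n : nat) (S : {set 'I_n}) : {poly int} :=
  \sum_(s in S) 'X^(nat_of_ord s).

Definition pdvdQ (p q : {poly int}) : bool :=
  (map_poly (intr : int -> rat) p %| map_poly (intr : int -> rat) q)%R.

(* Let z be a primitive (m r)-th root of unity, w := z ^+ m, and
   E x := \sum_(s in S) x ^+ s.  The hypotheses say that E vanishes at every
   primitive (m r)-th root of unity but not at the primitive m-th root z ^+ r.
   For 0 < q < r the exponent r + m q is coprime to m r, so for every j,
     E (z ^+ r) = \sum_(q < r) w ^+ (- q j) E (z ^+ (r + m q))
                = \sum_(s in S) z ^+ (r s) \sum_(q < r) w ^+ (q (s - j)),
   and the inner sum vanishes unless s = j mod r.  Hence S meets every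
   residue class modulo r, and in particular has at least r elements. *)

From mathcomp Require Import all_boot all_order all_algebra all_field.
From mathcomp Require Import ring zify.
Set Implicit Arguments. Unset Strict Implicit. Unset Printing Implicit Defensive.
Import GRing.Theory.
Local Open Scope ring_scope.

Lemma map_poly_ratr_intr (F : numFieldType) (p : {poly int}) :
  map_poly (ratr : rat -> F) (map_poly intr p) = map_poly intr p.
Proof.
by rewrite -map_poly_comp; apply: eq_map_poly => b; rewrite /= rmorph_int.
Qed.

Lemma horner_mask_poly (R : comNzRingType) n (S : {set 'I_n}) (x : R) :
  (map_poly intr (mask_poly S)).[x] = \sum_(s in S) x ^+ s.
Proof.
rewrite /mask_poly rmorph_sum horner_sum; apply: eq_bigr => s _.
by rewrite /= map_polyXn hornerXn.
Qed.

Lemma pdvdQ_root (F : numFieldType) (p q : {poly int}) (x : F) :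
  pdvdQ p q -> root (map_poly intr p) x -> root (map_poly intr q) x.
Proof.
rewrite /pdvdQ -(dvdp_map (ratr : {rmorphism rat -> F})) !map_poly_ratr_intr.
exact: root_dvdp.
Qed.

Lemma pdvdQ_cyclotomic N (q : {poly int}) (y : algC) :
  N.-primitive_root y -> pdvdQ 'Phi_N q = root (map_poly intr q) y.
Proof.
move=> prim_y; apply/idP/idP => [dvd_q | q_y].
  apply: pdvdQ_root dvd_q _.
  by rewrite (Cintr_Cyclotomic prim_y) (root_cyclotomic prim_y).
have [p [Dp _] dvd_p] := minCpolyP y.
rewrite -map_poly_ratr_intr dvd_p in q_y.
rewrite /pdvdQ; suff -> : map_poly intr 'Phi_N = p by [].
apply: (@map_inj_poly _ _ (ratr : rat -> algC)); [exact: fmorph_inj | exact: rmorph0 |].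
by rewrite map_poly_ratr_intr -Dp (minCpoly_cyclotomic prim_y) (Cintr_Cyclotomic prim_y).
Qed.

Lemma pdvdQ_cyclotomic_mask N n (S : {set 'I_n}) (y : algC) :
  N.-primitive_root y -> pdvdQ 'Phi_N (mask_poly S) = (\sum_(s in S) y ^+ s == 0).
Proof. by move=> prim_y; rewrite (pdvdQ_cyclotomic _ prim_y) /root horner_mask_poly. Qed.

Lemma sum_expr_prim_root_eq0 (R : idomainType) (w : R) r e :
  r.-primitive_root w -> ~~ (r %| e)%N -> \sum_(q < r) (w ^+ e) ^+ q = 0.
Proof.
move=> prim_w r_ndvd_e.
have : (w ^+ e) ^+ r - 1 = 0 by rewrite exprAC (prim_expr_order prim_w) expr1n subrr.
rewrite subrX1 => /eqP; rewrite mulf_eq0 => /orP[|/eqP //].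
by rewrite subr_eq0 -(prim_order_dvd prim_w) (negbTE r_ndvd_e).
Qed.

Lemma coprime_addn_mul m r q :
  coprime m r -> coprime r q -> coprime (r + m * q) (m * r).
Proof.
move=> co_mr co_rq; rewrite coprimeMr; apply/andP; split.
  by rewrite coprime_sym /coprime addnC mulnC gcdnMDl.
by rewrite coprime_sym /coprime gcdnDl -/(coprime r _) coprimeMr co_rq coprime_sym co_mr.
Qed.

Lemma dvdn_addn_subn_mod r s j :
  (0 < r)%N -> (r %| s + (r - j %% r))%N = (s == j %[mod r]).
Proof.
move=> r_gt0; rewrite -(eqn_modDr (r - j %% r)).
have -> : (j + (r - j %% r) = (j %/ r).+1 * r)%N.
  by have := divn_eq j r; have := ltn_pmod j r_gt0; lia.
by rewrite modnMl /dvdn.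
Qed.

Lemma residues_leq_card n r (S : {set 'I_n}) :
  (0 < r)%N -> (forall j, exists2 s : 'I_n, s \in S & (s = j %[mod r])%N) ->
  (r <= #|S|)%N.
Proof.
move=> r_gt0 meets; pose res (s : 'I_n) : 'I_r := Ordinal (ltn_pmod s r_gt0).
apply: leq_trans (leq_imset_card res S).
rewrite -[X in (X <= _)%N]card_ord; apply: subset_leq_card; apply/subsetP => j _.
have [s sS sj] := meets j; apply/imsetP; exists s => //; apply: val_inj.
by rewrite /= sj modn_small.
Qed.

Section MaskSumResidues.

Variables (R : idomainType) (n m r : nat) (S : {set 'I_n}) (z : R).
Hypotheses (pr_r : prime r) (co_mr : coprime m r).
Hypothesis prim_z : (m * r).-primitive_root z.

Let E (x : R) := \sum_(s in S) x ^+ s.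

Lemma mask_sum_meets_residues :
  (forall k, coprime k (m * r) -> E (z ^+ k) = 0) -> E (z ^+ r) != 0 ->
  forall j, exists2 s : 'I_n, s \in S & (s = j %[mod r])%N.
Proof.
move=> E_prim E_r_neq0 j.
have [s /andP[sS /eqP sj] | none] := pickP [pred s | (s \in S) && (s == j %[mod r])%N].
  by exists s.
case/eqP: E_r_neq0.
have r_gt0 := prime_gt0 pr_r.
(* t plays the role of -j modulo r *)
set t := (r - j %% r)%N; set w := z ^+ m.
have prim_w : r.-primitive_root w.
  by have := dvdn_prim_root prim_z (dvdn_mull m (dvdnn r)); rewrite mulnK.
have twisted : \sum_(q < r) w ^+ (q * t) * E (z ^+ (r + m * q)) = E (z ^+ r).
  rewrite (bigD1 (Ordinal r_gt0)) //= big1 ?addr0 => [|q q_neq0].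
    by rewrite mul0n expr0 mul1r muln0 addn0.
  rewrite E_prim ?mulr0 // coprime_addn_mul // prime_coprime //.
  by rewrite gtnNdvd ?ltn_ord // lt0n; move: q_neq0; apply: contraNneq => q0; exact/eqP/val_inj.
rewrite -twisted /E; under eq_bigr => q _ do rewrite mulr_sumr.
rewrite exchange_big big1 //= => s sS.
have -> : \sum_(q < r) w ^+ (q * t) * (z ^+ (r + m * q)) ^+ s
          = z ^+ (r * s) * \sum_(q < r) (w ^+ (s + t)) ^+ q.
  rewrite mulr_sumr; apply: eq_bigr => q _.
  by rewrite -!exprM -!exprD; congr (_ ^+ _); ring.
rewrite sum_expr_prim_root_eq0 ?mulr0 // dvdn_addn_subn_mod //.
by move: (none s); rewrite /= sS /= => ->.
Qed.

End MaskSumResidues.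

Theorem lemma3p3 (n r : nat) (S : {set 'I_n}) :
  (0 < n)%N -> prime r -> (r %| n)%N ->
  (exists m : nat, [/\ (m %| n)%N, coprime m r,
      pdvdQ ('Phi_(m * r)) (mask_poly S) & ~~ pdvdQ ('Phi_m) (mask_poly S)]) ->
  (r <= #|S|)%N /\
  (forall a : 'I_n, exists2 s : 'I_n, s \in S & (s = a %[mod r])%N).
Proof.
(* [r %| n] only makes the residues modulo r the cosets of the subgroup of
   order n/r; the residue statement itself does not need it. *)
move=> n_gt0 pr_r _ [m [m_dvd_n co_mr Phi_mr_dvd Phi_m_ndvd]].
have m_gt0 : (0 < m)%N := dvdn_gt0 n_gt0 m_dvd_n.
have [|z prim_z] := @C_prim_root_exists (m * r); first by rewrite muln_gt0 m_gt0 prime_gt0.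
have prim_zr : m.-primitive_root (z ^+ r).
  by have := dvdn_prim_root prim_z (dvdn_mulr r (dvdnn m)); rewrite mulKn.
have meets : forall j, exists2 s : 'I_n, s \in S & (s = j %[mod r])%N.
  apply: (mask_sum_meets_residues pr_r co_mr prim_z) => [k co_k|]; last by rewrite -(pdvdQ_cyclotomic_mask _ prim_zr).
  have prim_zk : (m * r).-primitive_root (z ^+ k) by rewrite prim_root_exp_coprime.
  by apply/eqP; rewrite -(pdvdQ_cyclotomic_mask _ prim_zk).
split=> [|a]; last exact: meets.
exact: residues_leq_card (prime_gt0 pr_r) meets.
Qed.
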